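(* For every $n\geq1$ and every $i\in\{1,\dots,N\}$, $$C^{(n+1)}_{-i,i}\cdot v=G_i\, C^{(n)}_{ii}\cdot v-\lambda_i\,C^{(n)}_{-i,i}\cdot v-\sum_{k\in I,\ |k|>i}(-1)^{\bar k}\,C^{(n)}_{k,-k}\cdot v.$$
   Context: Let $N\geq1$, $I=\{-N,\dots,-1,1,\dots,N\}$, and for $k\in I$ put $\bar k=0$ if $k>0$, $\bar k=1$ if $k<0$. The Lie superalgebra $\mathfrak{q}(N)$ over $\mathbb{C}$ is spanned by elements $F_{ij}$ ($i,j\in I$) with $F_{-i,-j}=F_{ij}$ (realized as $F_{ij}=E_{ij}+E_{-i,-j}\in\mathfrak{gl}(N|N)$), $F_{ij}$ of parity $\bar\imath+\bar\jmath\bmod 2$, and supercommutator $$[F_{ij}, F_{kl}] = \delta_{kj} F_{il} - (-1)^{(\bar{\imath}+ \bar{\jmath})(\bar{k} + \bar{l})} \delta_{il} F_{kj} + \delta_{k,-j} F_{-i,l} - (-1)^{(\bar{\imath} + \bar{\jmath})(\bar{k} + \bar{l})} \delta_{-i,l} F_{k,-j}.$$ For $n\geq1$ define $C^{(n)}_{ij}\in U(\mathfrak{q}(N))$ by $$C^{(n)}_{ij} = \sum_{k_1,\ldots,k_{n-1}\in I}F_{ik_1} (-1)^{\bar{k}_1} F_{k_1k_2} (-1)^{\bar{k}_2} \cdots F_{k_{n-2}k_{n-1}} (-1)^{\bar{k}_{n-1}} F_{k_{n-1}j}$$ (so $C^{(1)}_{ij}=F_{ij}$). For $i>0$ let $G_i=F_{-i,i}$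 $(=F_{i,-i})$. Let $V$ be a representation of $\mathfrak{q}(N)$ and $v\in V$ a vector such that $F_{ij}\cdot v=0$ whenever $|i|<|j|$, and $F_{ii}\cdot v=\lambda_i v$ for $i=1,\dots,N$, where $\lambda_1,\dots,\lambda_N\in\mathbb{C}$. *)

From HB Require Import structures.
From mathcomp Require Import all_boot all_order all_algebra.
Set Implicit Arguments. Unset Strict Implicit. Unset Printing Implicit Defensive.
Import Order.TTheory GRing.Theory Num.Theory.
Local Open Scope ring_scope.

Definition Iseq (N : nat) : seq int :=
  [seq - (Posz k.+1) | k <- iota 0 N] ++ [seq Posz k.+1 | k <- iota 0 N].

(* kbar k = 0 if k > 0, 1 if k < 0 (as a boolean: true = 1). *)
Definition kbar (k : int) : bool := (k < 0).

Definition parF (i j : int) : bool := kbar i (+) kbar j.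

Definition ssign (R : ringType) (i j k l : int) : R :=
  (-1) ^+ (parF i j && parF k l).

(* A module over U(q(N)): operators rho i j (the action of F_ij) on V,
   linear, satisfying F_{-i,-j} = F_{ij} and the defining supercommutator
   relations of q(N), for all indices in I. *)
Definition qN_module (R : fieldType) (V : lmodType R) (N : nat)
    (rho : int -> int -> V -> V) : Prop :=
  [/\ forall i j, linear (rho i j),
      forall i j, i \in Iseq N -> j \in Iseq N -> rho (- i) (- j) = rho i j &
      forall i j k l, i \in Iseq N -> j \in Iseq N -> k \in Iseq N ->
        l \in Iseq N -> forall w : V,
        rho i j (rho k l w) - ssign R i j k l *: rho k l (rho i j w) =
          (if k == j then rho i l w else 0)
          - ssign R i j k l *: (if i == l then rho k j w else 0)
          + (if k == - j then rho (- i) l w else 0)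
          - ssign R i j k l *: (if - i == l then rho k (- j) w else 0)].

(* Cact rho n i j w = C^{(n+1)}_{ij} . w, where
   C^{(1)}_{ij} = F_{ij} and
   C^{(n+1)}_{ij} = sum_{k in I} F_{ik} (-1)^{kbar} C^{(n)}_{kj}
   (the defining iterated sum, grouped from the left factor). *)
Fixpoint Cact (R : fieldType) (V : lmodType R) (N : nat)
    (rho : int -> int -> V -> V) (n : nat) (i j : int) (w : V) : V :=
  match n with
  | 0 => rho i j w
  | n'.+1 => \sum_(k <- Iseq N) ((-1) ^+ kbar k) *: rho i k (Cact N rho n' k j w)
  end.

Definition C (R : fieldType) (V : lmodType R) (N : nat)
    (rho : int -> int -> V -> V) (n : nat) (i j : int) (w : V) : V :=
  Cact N rho n.-1 i j w.

From HB Require Import structures.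
From mathcomp Require Import all_boot all_order all_algebra.
Import Order.TTheory GRing.Theory Num.Theory.
Local Open Scope ring_scope.

(* The key fact is that the matrix entries C^{(n)}_{cd} of the powers of the
   generic matrix F transform under the adjoint action of q(N) exactly like
   the generators F_{cd} themselves:
     [F_{ab}, C^{(n)}_{cd}] = d_{cb} C^{(n)}_{ad} + d_{c,-b} C^{(n)}_{-a,d}
                              - s (d_{ad} C^{(n)}_{cb} + d_{-a,d} C^{(n)}_{c,-b}),
   with s the super-sign of the pair (F_{ab}, F_{cd}).
   Two consequences on the highest weight vector v follow:
   - C^{(n)}_{kj} v = 0 whenever |k| < |j| (lemma Cact_vanish);
   - each summand (-1)^{kbar} F_{-i,k} C^{(n)}_{ki} v of C^{(n+1)}_{-i,i} v is
     computed by commuting F_{-i,k} to the right (lemma summand_decomp): it is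
     G_i C^{(n)}_{ii} v for k = i, -lambda_i C^{(n)}_{-i,i} v for k = -i, zero
     for |k| < i, and (-1)^{kbar}(C^{(n)}_{-i,i} v - C^{(n)}_{k,-k} v) for |k| > i.
   Summing over k, the terms (-1)^{kbar} C^{(n)}_{-i,i} v cancel in pairs
   k, -k (lemma sum_sign_Iseq), which gives the theorem. *)

Set Implicit Arguments.
Unset Strict Implicit.
Unset Printing Implicit Defensive.

Section LinearMaps.
Variables (R : fieldType) (V : lmodType R) (f : V -> V).
Hypothesis f_lin : linear f.

Let F : {linear V -> V} := HB.pack f (GRing.isLinear.Build R V V *:%R f f_lin).

Lemma lin0 : f 0 = 0. Proof. exact: (raddf0 F). Qed.
Lemma linD x y : f (x + y) = f x + f y. Proof. exact: (raddfD F). Qed.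
Lemma linB x y : f (x - y) = f x - f y. Proof. exact: (raddfB F). Qed.
Lemma linZ a x : f (a *: x) = a *: f x. Proof. exact: (linearZZ F). Qed.
Lemma lin_sum (I : Type) (r : seq I) (P : pred I) (G : I -> V) :
  f (\sum_(k <- r | P k) G k) = \sum_(k <- r | P k) f (G k).
Proof. exact: (raddf_sum F). Qed.
Lemma lin_if (b : bool) x : f (if b then x else 0) = if b then f x else 0.
Proof. by case: b; rewrite ?lin0. Qed.

End LinearMaps.

Lemma sum_delta (V : zmodType) (T : eqType) (s : seq T) (b : T) (f : T -> V) :
  uniq s -> b \in s -> \sum_(k <- s) (if k == b then f k else 0) = f b.
Proof. by move=> us bs; rewrite -big_mkcond -big_filter filter_pred1_uniq // big_seq1. Qed.

Lemma sum_delta_sym (V : zmodType) (T : eqType) (s : seq T) (b : T) (f : T -> V) :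
  uniq s -> b \in s -> \sum_(k <- s) (if b == k then f k else 0) = f b.
Proof. by move=> us bs; rewrite -(sum_delta f us bs); apply: eq_bigr => k _; rewrite eq_sym. Qed.

Lemma sum_if_const (V : zmodType) (T : Type) (s : seq T) (P : bool) (f : T -> V) :
  \sum_(k <- s) (if P then f k else 0) = if P then \sum_(k <- s) f k else 0.
Proof. by case: P; rewrite /= ?big1_eq. Qed.

Lemma scale_if (R : pzRingType) (V : lmodType R) (a : R) (b : bool) (x : V) :
  a *: (if b then x else 0) = if b then a *: x else 0.
Proof. by case: b; rewrite ?scaler0. Qed.

Lemma scale_nested (R : pzRingType) (V : lmodType R) (sg s1 s2 : R) (Y Z W : V) :
  sg *: (s1 *: (s2 *: Y + Z) + W) = (sg * s1 * s2) *: Y + ((sg * s1) *: Z + sg *: W).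
Proof. by rewrite !scalerDr !scalerA addrA. Qed.

Section IndexSet.
Variable N : nat.

Lemma mem_Iseq (k : int) : (k \in Iseq N) = (k != 0) && (`|k| <= N)%N.
Proof.
rewrite /Iseq mem_cat; case: k => n; last first.
  rewrite NegzE oppr_eq0 /=; apply/idP/idP.
    by case/orP => /mapP [j]; rewrite mem_iota => // /andP [_ jN] /oppr_inj [->].
  by move=> nN; apply/orP; left; apply/mapP; exists n; rewrite ?mem_iota.
rewrite orbC; apply/idP/idP.
  by case/orP => /mapP [j]; rewrite mem_iota => // /andP [_ jN] [->].
by case: n => // n /= nN; apply/orP; left; apply/mapP; exists n; rewrite ?mem_iota.
Qed.

Lemma Iseq_uniq : uniq (Iseq N).
Proof.
have neg_inj : injective (fun k : nat => - Posz k.+1) by move=> x y /oppr_inj [].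
have pos_inj : injective (fun k : nat => Posz k.+1) by move=> x y [].
rewrite /Iseq cat_uniq (map_inj_uniq neg_inj) (map_inj_uniq pos_inj) iota_uniq /= andbT.
by apply/hasPn => _ /mapP [j _ ->]; apply/mapP => -[l _].
Qed.

Lemma Iseq_opp k : (- k \in Iseq N) = (k \in Iseq N).
Proof. by rewrite !mem_Iseq oppr_eq0 abszN. Qed.

Lemma Iseq_neq0 k : k \in Iseq N -> k != 0.
Proof. by rewrite mem_Iseq => /andP []. Qed.

Lemma absz_eq (k : int) (n : nat) : `|k|%N = n -> k = Posz n \/ k = - Posz n.
Proof. by case: k => m /= <-; [left | right; rewrite NegzE]. Qed.

Lemma Iseq_nat (i : nat) : (1 <= i <= N)%N -> Posz i \in Iseq N.
Proof. by rewrite mem_Iseq -lt0n. Qed.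

Lemma sum_sign_Iseq (R : pzRingType) (P : pred nat) :
  \sum_(k <- Iseq N | P `|k|%N) ((-1) ^+ kbar k : R) = 0.
Proof.
rewrite /Iseq big_cat !big_map /= -big_split /=.
by apply: big1 => j _; rewrite expr1 expr0 addNr.
Qed.

End IndexSet.

Lemma kbarN (x : int) : x != 0 -> kbar (- x) = ~~ kbar x.
Proof. by rewrite /kbar oppr_lt0 -leNgt => x0; rewrite lt_def x0. Qed.

Section Signs.
Variable R : nzRingType.

Lemma ssignM a b c k d : ssign R a b c k * ssign R a b k d = ssign R a b c d.
Proof.
rewrite /ssign -signr_addb /parF; congr (_ ^+ _).
by case: (kbar a); case: (kbar b); case: (kbar c); case: (kbar k); case: (kbar d).
Qed.

(* The twisted sign (-1)^{kbar} s(ab,ck) takes the same value at k = a and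
   k = b, and at k = -a and k = -b; this makes the correction terms in the
   inductive step of Cact_bracket cancel. *)
Definition twist (a b c k : int) : R := (-1) ^+ kbar k * ssign R a b c k.

Lemma twistM a b c k d : twist a b c k * ssign R a b k d = (-1) ^+ kbar k * ssign R a b c d.
Proof. by rewrite /twist -mulrA ssignM. Qed.

Lemma twist_same a b c : twist a b c b = twist a b c a.
Proof.
rewrite /twist /ssign -!signr_addb /parF; congr (_ ^+ _).
by case: (kbar a); case: (kbar b); case: (kbar c).
Qed.

Lemma twist_oppr a b c : a != 0 -> b != 0 -> twist a b c (- b) = twist a b c (- a).
Proof.
move=> a0 b0; rewrite /twist /ssign -!signr_addb /parF !kbarN //; congr (_ ^+ _).
by case: (kbar a); case: (kbar b); case: (kbar c).
Qed.

End Signs.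

Section Representation.
Variables (R : fieldType) (V : lmodType R) (N : nat) (rho : int -> int -> V -> V).
Hypothesis rho_rep : qN_module N rho.

Lemma rho_lin a b : linear (rho a b).
Proof. by case: rho_rep. Qed.

Lemma Cact_lin m c d : linear (Cact N rho m c d).
Proof.
elim: m c d => [|m IHm] c d a x y /=; first exact: rho_lin.
rewrite scaler_sumr -big_split /=; apply: eq_bigr => k _.
by rewrite IHm (linD (rho_lin _ _)) (linZ (rho_lin _ _)) scalerDr !scalerA mulrC.
Qed.

(* The right-hand side of the supercommutator [F_ab, X_cd] when the family
   X transforms like the generators F. *)
Definition bracket (X : int -> int -> V -> V) (a b c d : int) (w : V) : V :=
  (if c == b then X a d w else 0) + (if c == - b then X (- a) d w else 0)
  - ssign R a b c d *: ((if a == d then X c b w else 0) + (if - a == d then X c (- b) w else 0)).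

Lemma rho_bracket a b c d : a \in Iseq N -> b \in Iseq N -> c \in Iseq N -> d \in Iseq N ->
  forall w, rho a b (rho c d w) = ssign R a b c d *: rho c d (rho a b w) + bracket rho a b c d w.
Proof.
case: rho_rep => _ _ rel aI bI cI dI w.
have -> : bracket rho a b c d w = rho a b (rho c d w) - ssign R a b c d *: rho c d (rho a b w).
  by rewrite rel // /bracket scalerDr opprD !scale_if addrACA !addrA.
by rewrite addrC subrK.
Qed.

Lemma sum_rho_bracket m a b c d w : b \in Iseq N ->
  \sum_(k <- Iseq N) twist R a b c k *: rho c k (bracket (Cact N rho m) a b k d w) =
    twist R a b c b *: rho c b (Cact N rho m a d w)
    + twist R a b c (- b) *: rho c (- b) (Cact N rho m (- a) d w)
    - ssign R a b c d *: ((if a == d then Cact N rho m.+1 c b w else 0)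
                          + (if - a == d then Cact N rho m.+1 c (- b) w else 0)).
Proof.
move=> bI; rewrite /bracket.
under eq_bigr => k _.
  rewrite (linB (rho_lin _ _)) (linZ (rho_lin _ _)) !(linD (rho_lin _ _)) !(lin_if (rho_lin _ _)).
  rewrite scalerBr scalerA twistM mulrC -[(ssign R a b c d * _) *: _]scalerA !scalerDr !scale_if.
  over.
rewrite sumrB !big_split /= !sum_if_const -!scaler_sumr scalerDr !scale_if.
by rewrite !sum_delta ?Iseq_uniq ?Iseq_opp.
Qed.

Lemma sum_bracket_rho m a b c d w : a \in Iseq N ->
  \sum_(k <- Iseq N) (-1) ^+ kbar k *: bracket rho a b c k (Cact N rho m k d w) =
    (if c == b then Cact N rho m.+1 a d w else 0)
    + (if c == - b then Cact N rho m.+1 (- a) d w else 0)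
    - (twist R a b c a *: rho c b (Cact N rho m a d w)
       + twist R a b c (- a) *: rho c (- b) (Cact N rho m (- a) d w)).
Proof.
move=> aI; rewrite /bracket.
under eq_bigr => k _.
  rewrite scalerBr !scalerDr !scale_if !scalerA -/(twist R a b c k).
  over.
rewrite sumrB !big_split /= !sum_if_const.
by rewrite !sum_delta_sym ?Iseq_uniq ?Iseq_opp.
Qed.

Lemma Cact_bracket m a b c d :
  a \in Iseq N -> b \in Iseq N -> c \in Iseq N -> d \in Iseq N -> forall w,
  rho a b (Cact N rho m c d w) =
    ssign R a b c d *: Cact N rho m c d (rho a b w) + bracket (Cact N rho m) a b c d w.
Proof.
elim: m a b c d => [|m IHm] a b c d aI bI cI dI w; first exact: rho_bracket.
rewrite /= (lin_sum (rho_lin a b)).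
under eq_big_seq => k kI.
  rewrite (linZ (rho_lin _ _)) (rho_bracket aI bI cI kI) (IHm _ _ _ _ aI bI kI dI).
  rewrite (linD (rho_lin _ _)) (linZ (rho_lin _ _)) scale_nested.
  rewrite -/(twist R a b c k) twistM mulrC -scalerA.
  over.
rewrite big_split /= -scaler_sumr big_split /= sum_rho_bracket // sum_bracket_rho //.
rewrite twist_same twist_oppr ?(Iseq_neq0 aI) ?(Iseq_neq0 bI) //.
by congr (_ + _); rewrite addrC addrA subrK.
Qed.

End Representation.

Section HighestWeight.
Variables (R : fieldType) (V : lmodType R) (N : nat) (rho : int -> int -> V -> V).
Variables (v : V) (lambda : nat -> R).
Hypothesis rho_rep : qN_module N rho.
Hypothesis v_high : forall i j, i \in Iseq N -> j \in Iseq N -> (`|i| < `|j|)%N ->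
  rho i j v = 0.
Hypothesis v_weight : forall i : nat, (1 <= i <= N)%N -> rho (Posz i) (Posz i) v = lambda i *: v.

Lemma Cact_vanish m k j : k \in Iseq N -> j \in Iseq N -> (`|k| < `|j|)%N ->
  Cact N rho m k j v = 0.
Proof.
elim: m k => [|m IHm] k kI jI kj /=; first exact: v_high.
apply: big1_seq => l /andP [_ lI].
have [lj | jl] := ltnP `|l| `|j|; first by rewrite IHm // (lin0 (rho_lin rho_rep _ _)) scaler0.
have kl : (`|k| < `|l|)%N := leq_trans kj jl.
rewrite (Cact_bracket rho_rep m kI lI lI jI) v_high // (lin0 (Cact_lin rho_rep _ _ _)).
have kj' : k != j by apply: contraTneq kj => ->; rewrite ltnn.
have kNj : - k != j by apply: contraTneq kj => <-; rewrite abszN ltnn.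
rewrite /bracket eqxx (negbTE kj') (negbTE kNj) IHm //.
by rewrite eq_sym eqNr (negbTE (Iseq_neq0 lI)) !(scaler0, add0r, addr0, subr0, oppr0).
Qed.

Section Summands.
Variable i : nat.
Hypothesis iI : (1 <= i <= N)%N.

Let i_mem : Posz i \in Iseq N. Proof. exact: Iseq_nat. Qed.
Let Ni_mem : - Posz i \in Iseq N. Proof. by rewrite Iseq_opp. Qed.
Let i_neq0 : Posz i != 0. Proof. exact: Iseq_neq0 i_mem. Qed.

(* The summand k = -i: F_{-i,-i} = F_ii acts on C_{-i,i} v by lambda_i. *)
Lemma summand_diag m :
  (-1) ^+ kbar (- Posz i) *: rho (- Posz i) (- Posz i) (Cact N rho m (- Posz i) (Posz i) v) =
    - (lambda i *: Cact N rho m (- Posz i) (Posz i) v).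
Proof.
have [_ rho_opp _] := rho_rep.
rewrite kbarN // expr1 scaleN1r rho_opp // (Cact_bracket rho_rep m i_mem i_mem Ni_mem i_mem).
rewrite v_weight // (linZ (Cact_lin rho_rep _ _ _)) /bracket !eqxx eqNr (negbTE i_neq0).
by rewrite /ssign /parF addbb expr0 !scale1r addr0 add0r subrr addr0.
Qed.

(* The summands with |k| > i: F_{-i,k} kills v, and the commutator leaves
   C_{-i,i} v - C_{k,-k} v. *)
Lemma summand_upper m k : k \in Iseq N -> (i < `|k|)%N ->
  rho (- Posz i) k (Cact N rho m k (Posz i) v) =
    Cact N rho m (- Posz i) (Posz i) v - Cact N rho m k (- k) v.
Proof.
move=> kI ik; rewrite (Cact_bracket rho_rep m Ni_mem kI kI i_mem) v_high ?abszN //.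
rewrite (lin0 (Cact_lin rho_rep _ _ _)) scaler0 add0r /bracket eqxx opprK eqxx.
rewrite eqNr (negbTE i_neq0) eq_sym eqNr (negbTE (Iseq_neq0 kI)).
have -> : ssign R (- Posz i) k k (Posz i) = 1.
  by rewrite /ssign /parF kbarN //=; case: (kbar k).
by rewrite scale1r !add0r addr0.
Qed.

Lemma summand_decomp m k : k \in Iseq N ->
  (-1) ^+ kbar k *: rho (- Posz i) k (Cact N rho m k (Posz i) v) =
    (if k == Posz i then rho (- Posz i) (Posz i) (Cact N rho m (Posz i) (Posz i) v) else 0)
    - (if k == - Posz i then lambda i *: Cact N rho m (- Posz i) (Posz i) v else 0)
    + (if (i < `|k|)%N then (-1) ^+ kbar k *: Cact N rho m (- Posz i) (Posz i) v else 0)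
    - (if (i < `|k|)%N then (-1) ^+ kbar k *: Cact N rho m k (- k) v else 0).
Proof.
move=> kI; have [-> | ki] := eqVneq k (Posz i).
  by rewrite expr0 scale1r eq_sym eqNr (negbTE i_neq0) ltnn !(subr0, addr0).
have [-> | kNi] := eqVneq k (- Posz i).
  by rewrite summand_diag abszN ltnn !(add0r, subr0, addr0).
have [ik | ki'] := ltnP i `|k|; first by rewrite summand_upper // scalerBr subr0 add0r.
have kl : (`|k| < `|Posz i|)%N.
  rewrite ltn_neqAle ki' andbT; apply/eqP => /absz_eq [] kE.
  - by rewrite kE eqxx in ki.
  - by rewrite kE eqxx in kNi.
by rewrite Cact_vanish // (lin0 (rho_lin rho_rep _ _)) scaler0 !(subr0, addr0).
Qed.

End Summands.
End HighestWeight.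

Unset Implicit Arguments.
Set Strict Implicit.

Theorem mainTheorem7 (R : fieldType) (V : lmodType R) (N : nat)
  (rho : int -> int -> V -> V) (v : V) (lambda : nat -> R) :
  (1 <= N)%N ->
  qN_module N rho ->
  (forall i j, i \in Iseq N -> j \in Iseq N -> (`|i| < `|j|)%N ->
     rho i j v = 0) ->
  (forall i : nat, (1 <= i <= N)%N -> rho (Posz i) (Posz i) v = lambda i *: v) ->
  forall (n i : nat), (1 <= n)%N -> (1 <= i <= N)%N ->
    C N rho n.+1 (- Posz i) (Posz i) v =
      rho (- Posz i) (Posz i) (C N rho n (Posz i) (Posz i) v)
      - lambda i *: C N rho n (- Posz i) (Posz i) v
      - \sum_(k <- Iseq N | (i < `|k|)%N)
          ((-1) ^+ kbar k) *: C N rho n k (- k) v.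
Proof.
move=> _ rho_rep v_high v_weight [//|m] i _ iI; rewrite /C /=.
rewrite (eq_big_seq _ (summand_decomp rho_rep v_high v_weight iI m)).
rewrite sumrB big_split sumrB /= !sum_delta ?Iseq_uniq ?Iseq_opp ?Iseq_nat //.
by rewrite -!big_mkcond -scaler_suml sum_sign_Iseq scale0r addr0.
Qed.
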